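(* Let $n$ be a principal, $P'\subseteq\mathsf{Privileges}$, and $S$ a (possibly empty) list such that $\langle n,P'\rangle::S\in\mathsf{Stacks}$. Let $e$ be a standard expression with $D\vdash e:t$, and let $h\in[\![D]\!]$, $h'\in[\![D]\!]_s$. Put $P=\mathsf{privs}(\langle n,P'\rangle::S)$, $u=[\![D\vdash e:t]\!]\,n\,P\,h$ and $u'=[\![D\vdash e:t]\!]_s(\langle n,P'\rangle::S)\,h'$. Then $\mathsf{sim}\,D\,h\,h'$ implies $\mathsf{sim}\,t\,u\,u'$.
   Context: Fix sets $\mathsf{Principals}$ and $\mathsf{Privileges}$ and an access control list $\mathcal{A}:\mathsf{Principals}\to\mathcal{P}(\mathsf{Privileges})$. Language. Types: $t::=\mathtt{bool}\mid t_1\to t_2$. Expressions: $e::=\mathtt{true}\mid x\mid \mathtt{if}\ e\ \mathtt{then}\ e_1\ \mathtt{else}\ e_2\mid \lambda x.e\mid e_1\,e_2\mid \mathtt{letrec}\ f(x)=e_1\ \mathtt{in}\ e_2\mid \mathtt{signs}\ n\ e\mid \mathtt{dopriv}\ p\ \mathtt{in}\ e\mid \mathtt{check}\ p\ \mathtt{for}\ e\mid \mathtt{test}\ p\ \mathtt{then}\ e_1\ \mathtt{else}\ e_2$ ($n$ a principal, $p$ a privilege). Typing $D\vdash e:t$ is simply typed: $\mathtt{letrec}$ typed by $D,f:t_1\to t_2,x:t_1\vdash e_1:t_2$ and $D,f:t_1\to t_2\vdash e_2:t$; $\mathtt{signs},\mathtt{dopriv},\mathtt{check}$ preserve the body type;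 $\mathtt{test}$, $\mathtt{if}$ need branches of a common type ($\mathtt{if}$ a $\mathtt{bool}$ guard). An expression is standard if for every subexpression $\lambda x.e$ or $\mathtt{letrec}\ f(x)=e\ \mathtt{in}\ e_1$, the body $e$ is of the form $\mathtt{signs}\ n\ e'$. Common. $\bot,\star$ are two distinct values, neither booleans nor functions. For a cpo $C$, $C_{\bot\star}=C\cup\{\bot,\star\}$ with $u\le v$ iff $u=\bot$ or $u=v$ or $u,v\in C$, $u\le v$. ''let $d=E_1$ in $E_2$'' yields $E_1$ if $E_1\in\{\bot,\star\}$, else $E_2$ with $d:=E_1$; $\mathit{fix}$ is least fixed point. Eager semantics. $[\![\mathtt{bool}]\!]=\{\mathsf{true},\mathsf{false}\}$ and $\mathcal{P}(\mathsf{Privileges})$ ordered by equality; $[\![t_1\to t_2]\!]=\mathcal{P}(\mathsf{Privileges})\to[\![t_1]\!]\to[\![t_2]\!]_{\bot\star}$ (continuous, pointwise). $[\![D]\!]$: records $h$ with $h.x\in[\![D(x)]\!]$. $[\![D\vdash e:t]\!]\in\mathsf{Principals}\to\mathcal{P}(\mathsf{Privileges})\to[\![D]\!]\to[\![t]\!]_{\bot\star}$, written $[\![e]\!]nPh$. $P\sqcup_n\{p\}$ is $P\cup\{p\}$ if $p\in\mathcal{A}(n)$, else $P$. Equations: $[\![\mathtt{true}]\!]nPh=\mathsf{true}$; $[\![x]\!]nPh=h.x$; $[\![\mathtt{if}\ e\ \mathtt{then}\ e_1\ \mathtt{else}\ e_2]\!]nPh=$ let $b=[\![e]\!]nPh$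 in (if $b$ then $[\![e_1]\!]nPh$ else $[\![e_2]\!]nPh$); $[\![\lambda x.e]\!]nPh=\lambda P'.\lambda d.[\![e]\!]nP'(h[x\mapsto d])$; $[\![e_1e_2]\!]nPh=$ let $f=[\![e_1]\!]nPh$ in let $d=[\![e_2]\!]nPh$ in $fPd$; $[\![\mathtt{letrec}\ f(x)=e_1\ \mathtt{in}\ e_2]\!]nPh=[\![e_2]\!]nP(h[f\mapsto\mathit{fix}\,G])$ with $G(g)=\lambda P'.\lambda d.[\![e_1]\!]nP'(h[f\mapsto g,x\mapsto d])$; $[\![\mathtt{signs}\ n'\ e]\!]nPh=[\![e]\!]n'(P\cap\mathcal{A}(n'))h$; $[\![\mathtt{dopriv}\ p\ \mathtt{in}\ e]\!]nPh=[\![e]\!]n(P\sqcup_n\{p\})h$; $[\![\mathtt{check}\ p\ \mathtt{for}\ e]\!]nPh=$ if $p\in P$ then $[\![e]\!]nPh$ else $\star$; $[\![\mathtt{test}\ p\ \mathtt{then}\ e_1\ \mathtt{else}\ e_2]\!]nPh=$ if $p\in P$ then $[\![e_1]\!]nPh$ else $[\![e_2]\!]nPh$. Stacks. $\mathsf{Stacks}$ is the set of nonempty lists of pairs $\langle n,P\rangle\in\mathsf{Principals}\times\mathcal{P}(\mathsf{Privileges})$, ordered by equality; $::$ is cons (head = top). $\mathsf{check}(p,\mathrm{nil})$ is false and $\mathsf{check}(p,\langle n,P\rangle::S)$ iff $p\in\mathcal{A}(n)\wedge(p\in P\vee\mathsf{check}(p,S))$. $\mathsf{privs}(S)=\{p:\mathsf{check}(p,S)\}$.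 Stack semantics. $[\![\mathtt{bool}]\!]_s=\{\mathsf{true},\mathsf{false}\}$, $[\![t_1\to t_2]\!]_s=\mathsf{Stacks}\to[\![t_1]\!]_s\to([\![t_2]\!]_s)_{\bot\star}$; $[\![D]\!]_s$: records $h$ with $h.x\in[\![D(x)]\!]_s$; $[\![D\vdash e:t]\!]_s\in\mathsf{Stacks}\to[\![D]\!]_s\to([\![t]\!]_s)_{\bot\star}$, written $[\![e]\!]_sSh$: $[\![\mathtt{true}]\!]_sSh=\mathsf{true}$; $[\![x]\!]_sSh=h.x$; $\mathtt{if}$: let $b=[\![e]\!]_sSh$ in (if $b$ then $[\![e_1]\!]_sSh$ else $[\![e_2]\!]_sSh$); $[\![\lambda x.e]\!]_sSh=\lambda S'.\lambda d.[\![e]\!]_sS'(h[x\mapsto d])$; $[\![e_1e_2]\!]_sSh=$ let $f=[\![e_1]\!]_sSh$ in let $d=[\![e_2]\!]_sSh$ in $fSd$; $[\![\mathtt{letrec}\ f(x)=e_1\ \mathtt{in}\ e_2]\!]_sSh=[\![e_2]\!]_sS(h[f\mapsto\mathit{fix}\,G])$ with $G(g)=\lambda S'.\lambda d.[\![e_1]\!]_sS'(h[f\mapsto g,x\mapsto d])$; $[\![\mathtt{signs}\ n'\ e]\!]_sSh=[\![e]\!]_s(\langle n',\varnothing\rangle::S)h$; $[\![\mathtt{dopriv}\ p\ \mathtt{in}\ e]\!]_s(\langle n,P\rangle::S)h=[\![e]\!]_s(\langle n,P\cup\{p\}\rangle::S)h$; $[\![\mathtt{check}\ p\ \mathtt{for}\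 e]\!]_sSh=$ if $\mathsf{check}(p,S)$ then $[\![e]\!]_sSh$ else $\star$; $[\![\mathtt{test}\ p\ \mathtt{then}\ e_1\ \mathtt{else}\ e_2]\!]_sSh=$ if $\mathsf{check}(p,S)$ then $[\![e_1]\!]_sSh$ else $[\![e_2]\!]_sSh$. Relation $\mathsf{sim}\,t\subseteq[\![t]\!]_{\bot\star}\times([\![t]\!]_s)_{\bot\star}$: $\mathsf{sim}\,t\,d\,d'$ is true if $d=d'\in\{\bot,\star\}$, false if $d\ne d'$ and one of them is in $\{\bot,\star\}$; otherwise $\mathsf{sim}\,\mathtt{bool}\,b\,b'$ iff $b=b'$, and $\mathsf{sim}(t_1\to t_2)\,f\,f'$ iff for all $S\in\mathsf{Stacks}$, $d\in[\![t_1]\!]$, $d'\in[\![t_1]\!]_s$: $\mathsf{sim}\,t_1\,d\,d'$ implies $\mathsf{sim}\,t_2\,(f(\mathsf{privs}\,S)d)\,(f'Sd')$. For environments, $\mathsf{sim}\,D\,h\,h'$ iff $\mathsf{sim}(D(x))(h.x)(h'.x)$ for all $x$ in the domain of $h$. *)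

From Stdlib Require Import ClassicalEpsilon List Arith.

Set Implicit Arguments.

Inductive ty : Type := TBool | TArr (t1 t2 : ty).

Inductive lift (A : Type) : Type := Bot | Star | Val (a : A).
Arguments Bot {A}. Arguments Star {A}. Arguments Val {A} a.

Definition liftle {A} (R : A -> A -> Prop) (u v : lift A) : Prop :=
  match u, v with
  | Bot, _ => True
  | Star, Star => True
  | Val a, Val b => R a b
  | _, _ => False
  end.

Definition liftelem {A} (E : A -> Prop) (u : lift A) : Prop :=
  match u with Val a => E a | _ => True end.

Definition is_lub {A} (E : A -> Prop) (R : A -> A -> Prop) (c : nat -> A) (l : A) : Prop :=
  E l /\ (forall k, R (c k) l) /\ (forall u, E u -> (forall k, R (c k) u) -> R l u).

Definition bind {A B} (u : lift A) (k : A -> lift B) : lift B :=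
  match u with Bot => Bot | Star => Star | Val a => k a end.

Definition var := nat.
Definition ctx := var -> option ty.
Definition upd (D : ctx) (x : var) (t : ty) : ctx :=
  fun y => if Nat.eq_dec y x then Some t else D y.

Section Domains.
(* X is the type of the extra argument of functions: P(Privileges) for the
   eager semantics, Stacks for the stack semantics (both ordered by equality). *)
Variable X : Type.

(* raw carriers; the actual cpo [[t]] is the subset cut out by [elem t] *)
Fixpoint raw (t : ty) : Type :=
  match t with
  | TBool => bool
  | TArr t1 t2 => X -> raw t1 -> lift (raw t2)
  end.

Fixpoint le (t : ty) : raw t -> raw t -> Prop :=
  match t return raw t -> raw t -> Prop with
  | TBool => fun a b => a = b
  | TArr t1 t2 => fun f g =>
      forall (P : X) (d : raw t1), elem t1 d -> liftle (le t2) (f P d) (g P d)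
  end
with elem (t : ty) : raw t -> Prop :=
  match t return raw t -> Prop with
  | TBool => fun _ => True
  | TArr t1 t2 => fun f => forall P : X,
      (forall d, elem t1 d -> liftelem (elem t2) (f P d)) /\
      (forall d d', elem t1 d -> elem t1 d' -> le t1 d d' ->
          liftle (le t2) (f P d) (f P d')) /\
      (forall (c : nat -> raw t1) (l : raw t1),
          (forall k, elem t1 (c k)) -> (forall k, le t1 (c k) (c (S k))) ->
          is_lub (elem t1) (le t1) c l ->
          is_lub (liftelem (elem t2)) (liftle (le t2)) (fun k => f P (c k)) (f P l))
  end.

Definition raw_inh (t : ty) : raw t :=
  match t return raw t with
  | TBool => true
  | TArr t1 t2 => fun _ _ => Bot
  end.

Definition is_lfp (t : ty) (G : raw t -> raw t) (g : raw t) : Prop :=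
  elem t g /\ le t (G g) g /\ le t g (G g) /\
  (forall g', elem t g' -> le t (G g') g' -> le t g' (G g') -> le t g g').

Definition fixp (t : ty) (G : raw t -> raw t) : raw t :=
  epsilon (inhabits (raw_inh t)) (is_lfp t G).

Definition envty (o : option ty) : Type :=
  match o with Some t => raw t | None => unit end.
Definition env (D : ctx) : Type := forall x : var, envty (D x).

Definition envelem (D : ctx) (h : env D) : Prop :=
  forall x, match D x as o return envty o -> Prop with
            | Some t => elem t
            | None => fun _ => True
            end (h x).

Definition extend (D : ctx) (h : env D) (x : var) (t : ty) (d : raw t)
  : env (upd D x t) :=
  fun y => match Nat.eq_dec y x as b
                 return envty (if b then Some t else D y) with
           | left _ => d
           | right _ => h y
           end.

End Domains.

Section Language.
Variables Principal Privilege : Type.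

Inductive exp : Type :=
| ETrue
| EVar (x : var)
| EIf (e e1 e2 : exp)
| ELam (x : var) (e : exp)
| EApp (e1 e2 : exp)
| ELetrec (f x : var) (e1 e2 : exp)
| ESigns (n : Principal) (e : exp)
| EDopriv (p : Privilege) (e : exp)
| ECheck (p : Privilege) (e : exp)
| ETest (p : Privilege) (e1 e2 : exp).

Inductive has_type : ctx -> exp -> ty -> Type :=
| T_True D : has_type D ETrue TBool
| T_Var D x t : D x = Some t -> has_type D (EVar x) t
| T_If D e e1 e2 t :
    has_type D e TBool -> has_type D e1 t -> has_type D e2 t -> has_type D (EIf e e1 e2) t
| T_Lam D x e t1 t2 :
    has_type (upd D x t1) e t2 -> has_type D (ELam x e) (TArr t1 t2)
| T_App D e1 e2 t1 t2 :
    has_type D e1 (TArr t1 t2) -> has_type D e2 t1 -> has_type D (EApp e1 e2) t2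
| T_Letrec D f x e1 e2 t1 t2 t :
    has_type (upd (upd D f (TArr t1 t2)) x t1) e1 t2 ->
    has_type (upd D f (TArr t1 t2)) e2 t ->
    has_type D (ELetrec f x e1 e2) t
| T_Signs D n e t : has_type D e t -> has_type D (ESigns n e) t
| T_Dopriv D p e t : has_type D e t -> has_type D (EDopriv p e) t
| T_Check D p e t : has_type D e t -> has_type D (ECheck p e) t
| T_Test D p e1 e2 t :
    has_type D e1 t -> has_type D e2 t -> has_type D (ETest p e1 e2) t.

Definition is_signs (e : exp) : Prop :=
  match e with ESigns _ _ => True | _ => False end.

Fixpoint standard (e : exp) : Prop :=
  match e with
  | ETrue | EVar _ => True
  | EIf e0 e1 e2 => standard e0 /\ standard e1 /\ standard e2
  | ELam _ b => is_signs b /\ standard b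
  | EApp e1 e2 => standard e1 /\ standard e2
  | ELetrec _ _ b e2 => is_signs b /\ standard b /\ standard e2
  | ESigns _ b | EDopriv _ b | ECheck _ b => standard b
  | ETest _ e1 e2 => standard e1 /\ standard e2
  end.

Definition Pset := Privilege -> Prop.

Variable ACL : Principal -> Pset.

(* Stacks: nonempty lists of pairs <n,P>, head = top *)
Record stack : Type := MkStack { stop : Principal * Pset; srest : list (Principal * Pset) }.

Fixpoint checkl (p : Privilege) (l : list (Principal * Pset)) : Prop :=
  match l with
  | nil => False
  | (n, P) :: l' => ACL n p /\ (P p \/ checkl p l')
  end.

Definition scheck (p : Privilege) (S : stack) : Prop := checkl p (stop S :: srest S).
Definition privs (S : stack) : Pset := fun p => scheck p S.

Fixpoint den (D : ctx) (e : exp) (t : ty) (der : has_type D e t) {struct der}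
  : Principal -> Pset -> env Pset D -> lift (raw Pset t) :=
  match der in has_type D e t
        return Principal -> Pset -> env Pset D -> lift (raw Pset t) with
  | @T_True _ => fun n P h => Val true
  | @T_Var D x t0 H => fun n P h => Val (eq_rect (D x) (envty Pset) (h x) (Some t0) H)
  | @T_If _ _ _ _ _ d0 d1 d2 => fun n P h =>
      bind (den d0 n P h) (fun b : bool => if b then den d1 n P h else den d2 n P h)
  | @T_Lam _ x _ t1 t2 d0 => fun n P h =>
      Val (fun P' dd => den d0 n P' (extend h x t1 dd))
  | @T_App _ _ _ t1 t2 d1 d2 => fun n P h =>
      bind (den d1 n P h) (fun fv => bind (den d2 n P h) (fun a => fv P a))
  | @T_Letrec _ f x _ _ t1 t2 _ d1 d2 => fun n P h =>
      den d2 n P (extend h f (TArr t1 t2)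
        (fixp Pset (TArr t1 t2)
          (fun g => fun P' dd => den d1 n P' (extend (extend h f (TArr t1 t2) g) x t1 dd))))
  | @T_Signs _ n' _ _ d0 => fun n P h => den d0 n' (fun q => P q /\ ACL n' q) h
  | @T_Dopriv _ p _ _ d0 => fun n P h => den d0 n (fun q => P q \/ (q = p /\ ACL n p)) h
  | @T_Check _ p _ _ d0 => fun n P h =>
      if excluded_middle_informative (P p) then den d0 n P h else Star
  | @T_Test _ p _ _ _ d1 d2 => fun n P h =>
      if excluded_middle_informative (P p) then den d1 n P h else den d2 n P h
  end.

Fixpoint sden (D : ctx) (e : exp) (t : ty) (der : has_type D e t) {struct der}
  : stack -> env stack D -> lift (raw stack t) :=
  match der in has_type D e t
        return stack -> env stack D -> lift (raw stack t) with
  | @T_True _ => fun S h => Val true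
  | @T_Var D x t0 H => fun S h => Val (eq_rect (D x) (envty stack) (h x) (Some t0) H)
  | @T_If _ _ _ _ _ d0 d1 d2 => fun S h =>
      bind (sden d0 S h) (fun b : bool => if b then sden d1 S h else sden d2 S h)
  | @T_Lam _ x _ t1 t2 d0 => fun S h =>
      Val (fun S' dd => sden d0 S' (extend h x t1 dd))
  | @T_App _ _ _ t1 t2 d1 d2 => fun S h =>
      bind (sden d1 S h) (fun fv => bind (sden d2 S h) (fun a => fv S a))
  | @T_Letrec _ f x _ _ t1 t2 _ d1 d2 => fun S h =>
      sden d2 S (extend h f (TArr t1 t2)
        (fixp stack (TArr t1 t2)
          (fun g => fun S' dd => sden d1 S' (extend (extend h f (TArr t1 t2) g) x t1 dd))))
  | @T_Signs _ n' _ _ d0 => fun S h =>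
      sden d0 (MkStack (n', fun _ => False) (stop S :: srest S)) h
  | @T_Dopriv _ p _ _ d0 => fun S h =>
      let (n, P) := stop S in
      sden d0 (MkStack (n, fun q => P q \/ q = p) (srest S)) h
  | @T_Check _ p _ _ d0 => fun S h =>
      if excluded_middle_informative (scheck p S) then sden d0 S h else Star
  | @T_Test _ p _ _ _ d1 d2 => fun S h =>
      if excluded_middle_informative (scheck p S) then sden d1 S h else sden d2 S h
  end.

Definition simlift {A B} (R : A -> B -> Prop) (u : lift A) (u' : lift B) : Prop :=
  match u, u' with
  | Bot, Bot => True
  | Star, Star => True
  | Val a, Val b => R a b
  | _, _ => False
  end.

Fixpoint simv (t : ty) : raw Pset t -> raw stack t -> Prop :=
  match t return raw Pset t -> raw stack t -> Prop with
  | TBool => fun b b' => b = b'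
  | TArr t1 t2 => fun f f' =>
      forall (S : stack) (d : raw Pset t1) (d' : raw stack t1),
        elem Pset t1 d -> elem stack t1 d' ->
        simv t1 d d' -> simlift (simv t2) (f (privs S) d) (f' S d')
  end.

Definition sim (t : ty) := simlift (simv t).

Definition simenv (D : ctx) (h : env Pset D) (h' : env stack D) : Prop :=
  forall x, match D x as o return envty Pset o -> envty stack o -> Prop with
            | Some t => simv t
            | None => fun _ _ => True
            end (h x) (h' x).

End Language.

(* Both semantics are Scott-continuous in the environment (by induction on the
   typing derivation), so the least fixed point interpreting [letrec] is the lub
   of its Kleene chain.  The relation [sim] is closed under lubs of chains, hence
   the two fixed points are related by induction along their Kleene chains.  The
   other cases are a structural induction in which the eager privilege set is
   [privs] of the stack: a [signs n'] frame intersects it with [ACL n'], and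
   [dopriv p] on a top frame of principal [n] adds [p] exactly when [ACL n p]. *)

From Stdlib Require Import ClassicalEpsilon Arith Lia FunctionalExtensionality
  PropExtensionality RelationClasses.

Definition chain {A} (R : A -> A -> Prop) (c : nat -> A) : Prop :=
  forall k, R (c k) (c (S k)).

Section Lub.
Context {A : Type} {E : A -> Prop} {R : A -> A -> Prop} `{PreOrder A R}.

Lemma chain_le {c k k'} : chain R c -> k <= k' -> R (c k) (c k').
Proof. intros Hc Hk; induction Hk; [reflexivity | etransitivity; eauto]. Qed.

Lemma lub_elem {c l} : is_lub E R c l -> E l.
Proof. now intros []. Qed.

Lemma lub_ub {c l} k : is_lub E R c l -> R (c k) l.
Proof. now intros (_ & Hub & _). Qed.

Lemma lub_least {c l u} : is_lub E R c l -> E u -> (forall k, R (c k) u) -> R l u.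
Proof. intros (_ & _ & Hl); auto. Qed.

Lemma lub_mono {c c' l l'} :
  (forall k, R (c k) (c' k)) -> is_lub E R c l -> is_lub E R c' l' -> R l l'.
Proof.
  intros Hcc' Hl Hl'; apply (lub_least Hl (lub_elem Hl')).
  intros k; rewrite (Hcc' k); apply (lub_ub k Hl').
Qed.

Lemma lub_unique {c l l'} : is_lub E R c l -> is_lub E R c l' -> R l l'.
Proof. apply lub_mono; reflexivity. Qed.

Lemma lub_equiv {c l l'} : is_lub E R c l -> E l' -> R l l' -> R l' l -> is_lub E R c l'.
Proof.
  intros Hl El' Hll' Hl'l; split; [|split]; auto.
  - intros k; rewrite (lub_ub k Hl); exact Hll'.
  - intros u Eu Hu; rewrite Hl'l; exact (lub_least Hl Eu Hu).
Qed.

Lemma lub_const {a} : E a -> is_lub E R (fun _ => a) a.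
Proof. intros Ea; split; [|split]; [exact Ea | reflexivity | intros u _ Hu; exact (Hu 0)]. Qed.

Lemma lub_tail {c l} N : chain R c -> is_lub E R c l <-> is_lub E R (fun j => c (N + j)) l.
Proof.
  intros Hc; split; intros (El & Hub & Hleast); split; auto; split.
  - auto.
  - intros u Eu Hu; apply Hleast; auto; intros k.
    rewrite (chain_le (k := k) (k' := N + k) Hc ltac:(lia)); auto.
  - intros k; rewrite (chain_le (k := k) (k' := N + k) Hc ltac:(lia)); auto.
  - auto.
Qed.

Section Diagonal.
Variable a : nat -> nat -> A.
Hypothesis a_mono_l : forall i j, R (a i j) (a (S i) j).
Hypothesis a_mono_r : forall i j, R (a i j) (a i (S j)).

Lemma lub_diag {L M} :
  (forall i, is_lub E R (a i) (L i)) -> is_lub E R L M -> is_lub E R (fun k => a k k) M.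
Proof.
  intros HL HM; split; [exact (lub_elem HM)|split].
  - intros k; rewrite (lub_ub k (HL k)); exact (lub_ub k HM).
  - intros u Eu Hu; apply (lub_least HM Eu); intros i.
    apply (lub_least (HL i) Eu); intros j.
    rewrite <- (Hu (max i j)).
    transitivity (a (max i j) j).
    + apply (chain_le (c := fun i' => a i' j)); [intros k; apply a_mono_l | lia].
    + apply (chain_le (c := a (max i j))); [intros k; apply a_mono_r | lia].
Qed.

End Diagonal.

Lemma lub_swap (a : nat -> nat -> A) {L L' M'} :
  (forall i j, R (a i j) (a (S i) j)) -> (forall i j, R (a i j) (a i (S j))) ->
  (forall i, is_lub E R (a i) (L i)) -> (exists M, is_lub E R L M) ->
  (forall j, is_lub E R (fun i => a i j) (L' j)) -> is_lub E R L' M' -> is_lub E R L M'.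
Proof.
  intros Hl Hr HL [M HM] HL' HM'.
  pose proof (lub_diag a Hl Hr HL HM) as Hdiag.
  pose proof (lub_diag (fun i j => a j i) (fun i j => Hr j i) (fun i j => Hl j i) HL' HM')
    as Hdiag'.
  apply (lub_equiv HM (lub_elem HM')); eapply lub_unique; eauto.
Qed.

End Lub.

Lemma chain_tail {A} {R : A -> A -> Prop} {c} N : chain R c -> chain R (fun j => c (N + j)).
Proof. intros Hc j; rewrite Nat.add_succ_r; apply Hc. Qed.

#[global] Instance liftle_PreOrder {A} {R : A -> A -> Prop} `{PreOrder A R} :
  PreOrder (liftle R).
Proof.
  split.
  - intros [| |a]; simpl; auto; reflexivity.
  - intros [| |a] [| |b] [| |c]; simpl; try tauto; apply transitivity.
Qed.

Lemma lift_chain_star {A} {R : A -> A -> Prop} {u : nat -> lift A} {K} :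
  chain (liftle R) u -> u K = Star -> forall j, u (K + j) = Star.
Proof.
  intros Hu HK j; induction j as [|j IH]; [now rewrite Nat.add_0_r|].
  specialize (Hu (K + j)); rewrite IH, <- Nat.add_succ_r in Hu.
  destruct (u (K + S j)); simpl in Hu; tauto.
Qed.

Section Lift.
Context {A : Type} {E : A -> Prop} {R : A -> A -> Prop} `{PreOrder A R}.

Notation LE := (liftelem E).
Notation LR := (liftle R).

Lemma lub_Val {c l} : is_lub LE LR (fun k => Val (c k)) (Val l) <-> is_lub E R c l.
Proof.
  split; intros (El & Hub & Hleast); split; auto; split; auto.
  - intros u Eu Hu; exact (Hleast (Val u) Eu Hu).
  - intros [| |u] Eu Hu; try (specialize (Hu 0); contradiction).
    exact (Hleast u Eu Hu).
Qed.

Lemma lift_chain_val {u K a} : (forall k, LE (u k)) -> chain LR u -> u K = Val a ->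
  exists ac, (forall j, u (K + j) = Val (ac j)) /\ (forall j, E (ac j)) /\ chain R ac.
Proof.
  intros Eu Hu HK.
  assert (Hval : forall j, exists b, u (K + j) = Val b).
  { induction j as [|j [b Hb]]; [rewrite Nat.add_0_r; eauto|].
    specialize (Hu (K + j)); rewrite Hb, <- Nat.add_succ_r in Hu.
    destruct (u (K + S j)); simpl in Hu; try tauto; eauto. }
  set (ac := fun j => match u (K + j) with Val b => b | _ => a end).
  assert (Hac : forall j, u (K + j) = Val (ac j)).
  { intros j; unfold ac; destruct (Hval j) as [b ->]; reflexivity. }
  exists ac; split; [exact Hac|split].
  - intros j; specialize (Eu (K + j)); rewrite Hac in Eu; exact Eu.
  - intros j; specialize (Hu (K + j)).
    rewrite <- Nat.add_succ_r, (Hac j), (Hac (S j)) in Hu; exact Hu.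
Qed.

Lemma lift_lub_star {u} K : chain LR u -> u K = Star -> is_lub LE LR u Star.
Proof.
  intros Hu HK; apply (lub_tail K Hu).
  replace (fun j => u (K + j)) with (fun _ : nat => @Star A).
  - apply lub_const; exact I.
  - apply functional_extensionality; intros j; now rewrite (lift_chain_star Hu HK).
Qed.

Lemma lift_lub_val {u K ac a} : chain LR u -> (forall j, u (K + j) = Val (ac j)) ->
  is_lub E R ac a -> is_lub LE LR u (Val a).
Proof.
  intros Hu Hac Ha; apply (lub_tail K Hu).
  replace (fun j => u (K + j)) with (fun j => Val (ac j)).
  - now apply lub_Val.
  - apply functional_extensionality; intros j; now rewrite Hac.
Qed.

Lemma lift_lub_inv {u l} : (forall k, LE (u k)) -> chain LR u -> is_lub LE LR u l ->
  (l = Bot /\ forall k, u k = Bot) \/ (l = Star /\ exists K, u K = Star) \/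
  (exists K ac a, l = Val a /\ (forall j, u (K + j) = Val (ac j)) /\
     (forall j, E (ac j)) /\ chain R ac /\ is_lub E R ac a).
Proof.
  intros Eu Hu Hl.
  destruct (classic (exists K, u K <> Bot)) as [[K HK]|Hbot].
  - pose proof (lub_ub K Hl) as HKl.
    destruct (u K) as [| |a] eqn:EK; [contradiction| |].
    + right; left; destruct l; simpl in HKl; try contradiction; eauto.
    + right; right.
      destruct (lift_chain_val Eu Hu EK) as (ac & Hac & Eac & Cac).
      destruct l as [| |b]; simpl in HKl; try contradiction.
      exists K, ac, b; do 4 (split; [auto|]).
      apply lub_Val.
      replace (fun j => Val (ac j)) with (fun j => u (K + j))
        by (apply functional_extensionality; intros j; apply Hac).
      now apply (lub_tail K Hu).
  - assert (Hb : forall k, u k = Bot)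
      by (intros k; apply NNPP; intros Hk; apply Hbot; eauto).
    left; split; [|exact Hb].
    assert (Hlb : LR l Bot) by (apply (lub_least (u := Bot) Hl I); intros k; now rewrite Hb).
    destruct l; simpl in Hlb; tauto.
Qed.

Lemma lift_lub_exists :
  (forall c, (forall k, E (c k)) -> chain R c -> exists l, is_lub E R c l) ->
  forall u, (forall k, LE (u k)) -> chain LR u -> exists l, is_lub LE LR u l.
Proof.
  intros Hex u Eu Hu.
  destruct (classic (exists K, u K <> Bot)) as [[K HK]|Hbot].
  - destruct (u K) as [| |a] eqn:EK; [contradiction| |].
    + exists Star; exact (lift_lub_star K Hu EK).
    + destruct (lift_chain_val Eu Hu EK) as (ac & Hac & Eac & Cac).
      destruct (Hex ac Eac Cac) as [a' Ha'].
      exists (Val a'); exact (lift_lub_val Hu Hac Ha').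
  - exists Bot.
    replace u with (fun _ : nat => @Bot A).
    + apply lub_const; exact I.
    + apply functional_extensionality; intros k; apply NNPP; intros Hk; apply Hbot; eauto.
Qed.

End Lift.

Section Bind.
Context {A B : Type} {E : A -> Prop} {R : A -> A -> Prop} `{PreOrder A R}
  {E' : B -> Prop} {R' : B -> B -> Prop} `{PreOrder B R'}.

Lemma bind_lub {u : nat -> lift A} {ul} {K : nat -> A -> lift B} {Kl} :
  (forall k, liftelem E (u k)) -> chain (liftle R) u -> is_lub (liftelem E) (liftle R) u ul ->
  (forall k a a', E a -> E a' -> R a a' -> liftle R' (K k a) (K (S k) a')) ->
  (forall N ac al, (forall j, E (ac j)) -> chain R ac -> is_lub E R ac al ->
     is_lub (liftelem E') (liftle R') (fun j => K (N + j) (ac j)) (Kl al)) ->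
  is_lub (liftelem E') (liftle R') (fun k => bind (u k) (K k)) (bind ul Kl).
Proof.
  intros Eu Hu Hul Kmono Klub.
  assert (Hb : chain (liftle R') (fun k => bind (u k) (K k))).
  { intros k; specialize (Hu k); pose proof (Eu k); pose proof (Eu (S k)).
    destruct (u k), (u (S k)); simpl in *; try tauto; auto. }
  destruct (lift_lub_inv Eu Hu Hul)
    as [[-> Hbot] | [[-> [K0 HK]] | (K0 & ac & a & -> & Hac & Eac & Cac & Ha)]]; simpl.
  - replace (fun k => bind (u k) (K k)) with (fun _ : nat => @Bot B).
    + apply lub_const; exact I.
    + apply functional_extensionality; intros k; now rewrite Hbot.
  - apply (lift_lub_star K0 Hb); simpl; now rewrite HK.
  - apply (lub_tail K0 Hb).
    replace (fun j => bind (u (K0 + j)) (K (K0 + j))) with (fun j => K (K0 + j) (ac j)).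
    + now apply Klub.
    + apply functional_extensionality; intros j; now rewrite Hac.
Qed.

End Bind.

Section Domains.
Variable X : Type.

#[global] Instance le_PreOrder t : PreOrder (le X t).
Proof.
  induction t as [|t1 _ t2 IH2]; split.
  - intros b; reflexivity.
  - intros a b c; simpl; congruence.
  - intros f P d _; reflexivity.
  - intros f g k Hfg Hgk P d Hd; transitivity (g P d); auto.
Qed.

(* [elem X (TArr t1 t2) f] unfolds to [forall P, continuous t1 t2 (f P)]. *)
Definition continuous t1 t2 (phi : raw X t1 -> lift (raw X t2)) : Prop :=
  (forall d, elem X t1 d -> liftelem (elem X t2) (phi d)) /\
  (forall d d', elem X t1 d -> elem X t1 d' -> le X t1 d d' ->
     liftle (le X t2) (phi d) (phi d')) /\
  (forall c l, (forall k, elem X t1 (c k)) -> chain (le X t1) c ->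
     is_lub (elem X t1) (le X t1) c l ->
     is_lub (liftelem (elem X t2)) (liftle (le X t2)) (fun k => phi (c k)) (phi l)).

Lemma arrow_lub_intro {t1 t2} {c : nat -> raw X (TArr t1 t2)} {l : raw X (TArr t1 t2)} :
  elem X _ l ->
  (forall P d, elem X t1 d ->
     is_lub (liftelem (elem X t2)) (liftle (le X t2)) (fun k => c k P d) (l P d)) ->
  is_lub (elem X _) (le X _) c l.
Proof.
  intros El Hl; split; [exact El|split].
  - intros k P d Hd; exact (lub_ub k (Hl P d Hd)).
  - intros u Eu Hu P d Hd.
    exact (lub_least (Hl P d Hd) (proj1 (Eu P) d Hd) (fun k => Hu k P d Hd)).
Qed.

Definition has_lubs t : Prop :=
  forall c, (forall k, elem X t (c k)) -> chain (le X t) c ->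
  exists l, is_lub (elem X t) (le X t) c l.

(* Continuity of the pointwise lub: the lubs over the chain and over the
   argument commute. *)
Lemma arrow_pointwise_lub {t1 t2} {c : nat -> raw X (TArr t1 t2)} :
  has_lubs t2 -> (forall k, elem X _ (c k)) -> chain (le X _) c ->
  exists m : raw X (TArr t1 t2), elem X _ m /\
    forall P d, elem X t1 d ->
      is_lub (liftelem (elem X t2)) (liftle (le X t2)) (fun k => c k P d) (m P d).
Proof.
  intros Hlubs Ec Hc.
  set (m := fun P d => epsilon (inhabits Bot)
              (is_lub (liftelem (elem X t2)) (liftle (le X t2)) (fun k => c k P d))).
  assert (Hm : forall P d, elem X t1 d ->
    is_lub (liftelem (elem X t2)) (liftle (le X t2)) (fun k => c k P d) (m P d)).
  { intros P d Hd; apply epsilon_spec, lift_lub_exists; [exact Hlubs | |].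
    - intros k; exact (proj1 (Ec k P) d Hd).
    - intros k; exact (Hc k P d Hd). }
  assert (Hmono : forall P d d', elem X t1 d -> elem X t1 d' -> le X t1 d d' ->
    liftle (le X t2) (m P d) (m P d')).
  { intros P d d' Hd Hd' Hdd.
    exact (lub_mono (fun k => proj1 (proj2 (Ec k P)) d d' Hd Hd' Hdd) (Hm P d Hd) (Hm P d' Hd')). }
  exists m; split; [|exact Hm].
  intros P; split; [|split].
  - intros d Hd; exact (lub_elem (Hm P d Hd)).
  - exact (Hmono P).
  - intros dc dl Edc Hdc Hdl.
    apply (lub_swap (fun j k => c k P (dc j)) (L' := fun k => c k P dl)).
    + intros j k; exact (proj1 (proj2 (Ec k P)) _ _ (Edc j) (Edc (S j)) (Hdc j)).
    + intros j k; exact (Hc k P (dc j) (Edc j)).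
    + intros j; exact (Hm P (dc j) (Edc j)).
    + apply lift_lub_exists; [exact Hlubs | |].
      * intros j; exact (lub_elem (Hm P (dc j) (Edc j))).
      * intros j; exact (Hmono P _ _ (Edc j) (Edc (S j)) (Hdc j)).
    + intros k; exact (proj2 (proj2 (Ec k P)) dc dl Edc Hdc Hdl).
    + exact (Hm P dl (lub_elem Hdl)).
Qed.

Lemma lub_exists t : has_lubs t.
Proof.
  induction t as [|t1 _ t2 IH2]; intros c Ec Hc.
  - exists (c 0).
    replace c with (fun _ : nat => c 0).
    + apply lub_const; exact I.
    + apply functional_extensionality; intros k.
      induction k as [|k IHk]; [reflexivity|rewrite IHk; apply Hc].
  - destruct (arrow_pointwise_lub IH2 Ec Hc) as (m & Em & Hm).
    exists m; exact (arrow_lub_intro Em Hm).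
Qed.

Lemma arrow_lub_pointwise {t1 t2} {c : nat -> raw X (TArr t1 t2)} {l : raw X (TArr t1 t2)} :
  (forall k, elem X _ (c k)) -> chain (le X _) c -> is_lub (elem X _) (le X _) c l ->
  forall P d, elem X t1 d ->
    is_lub (liftelem (elem X t2)) (liftle (le X t2)) (fun k => c k P d) (l P d).
Proof.
  intros Ec Hc Hl P d Hd.
  destruct (arrow_pointwise_lub (lub_exists t2) Ec Hc) as (m & Em & Hm).
  pose proof (arrow_lub_intro Em Hm) as Hcm.
  apply (lub_equiv (Hm P d Hd) (proj1 (lub_elem Hl P) d Hd)).
  - exact (lub_unique Hcm Hl P d Hd).
  - exact (lub_unique Hl Hcm P d Hd).
Qed.

Lemma apply_lub {t1 t2} {fc : nat -> raw X (TArr t1 t2)} {fl : raw X (TArr t1 t2)} {dc dl} P :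
  (forall k, elem X _ (fc k)) -> chain (le X _) fc -> is_lub (elem X _) (le X _) fc fl ->
  (forall k, elem X t1 (dc k)) -> chain (le X t1) dc -> is_lub (elem X t1) (le X t1) dc dl ->
  is_lub (liftelem (elem X t2)) (liftle (le X t2)) (fun k => fc k P (dc k)) (fl P dl).
Proof.
  intros Efc Hfc Hfl Edc Hdc Hdl.
  exact (lub_diag (fun i j => fc i P (dc j))
           (fun i j => Hfc i P (dc j) (Edc j))
           (fun i j => proj1 (proj2 (Efc i P)) _ _ (Edc j) (Edc (S j)) (Hdc j))
           (fun i => proj2 (proj2 (Efc i P)) dc dl Edc Hdc Hdl)
           (arrow_lub_pointwise Efc Hfc Hfl P dl (lub_elem Hdl))).
Qed.

End Domains.

Section Kleene.
Variables (X : Type) (t1 t2 : ty).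
Notation T := (TArr t1 t2).
Variable G : raw X T -> raw X T.
Hypothesis G_cont : continuous X T T (fun g => Val (G g)).

Definition kleene (i : nat) : raw X T := Nat.iter i G (fun _ _ => Bot).

Lemma kleene_elem i : elem X T (kleene i).
Proof.
  induction i as [|i IH].
  - intros P; split; [|split]; simpl; auto.
    intros c l _ _ _; apply lub_const; exact I.
  - exact (proj1 G_cont _ IH).
Qed.

Lemma kleene_chain : chain (le X T) kleene.
Proof.
  intros i; induction i as [|i IH].
  - intros P d _; exact I.
  - exact (proj1 (proj2 G_cont) _ _ (kleene_elem i) (kleene_elem (S i)) IH).
Qed.

Lemma fixp_kleene_lub : is_lub (elem X T) (le X T) kleene (fixp X T G).
Proof.
  destruct (lub_exists X T kleene kleene_elem kleene_chain) as [gl Hgl].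
  assert (HGgl : is_lub (elem X T) (le X T) (fun i => kleene (1 + i)) (G gl))
    by exact (proj1 lub_Val (proj2 (proj2 G_cont) _ _ kleene_elem kleene_chain Hgl)).
  pose proof (proj1 (lub_tail 1 kleene_chain) Hgl) as Hgl1.
  assert (Hbelow : forall g, elem X T g -> le X T (G g) g -> forall i, le X T (kleene i) g).
  { intros g Eg HGg i; induction i as [|i IH]; [intros P d _; exact I|].
    transitivity (G g); [|exact HGg].
    exact (proj1 (proj2 G_cont) _ _ (kleene_elem i) Eg IH). }
  assert (Hlfp : is_lfp X T G gl).
  { split; [exact (lub_elem Hgl)|split; [|split]].
    - exact (lub_unique HGgl Hgl1).
    - exact (lub_unique Hgl1 HGgl).
    - intros g Eg HGg _; exact (lub_least Hgl Eg (Hbelow g Eg HGg)). }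
  assert (Hfix : is_lfp X T G (fixp X T G)) by (unfold fixp; apply epsilon_spec; eauto).
  destruct Hfix as (Efix & HGfix & _ & Hleast).
  apply (lub_equiv Hgl Efix).
  - exact (lub_least Hgl Efix (Hbelow _ Efix HGfix)).
  - destruct Hlfp as (Egl & HGgl' & HglG & _); exact (Hleast gl Egl HGgl' HglG).
Qed.

End Kleene.

Arguments kleene {X t1 t2} G i.
Arguments kleene_elem {X t1 t2 G} _ i.
Arguments kleene_chain {X t1 t2 G} _ _.
Arguments fixp_kleene_lub {X t1 t2 G} _.

Section Environments.
Context {X : Type}.

Definition oelem (o : option ty) : envty X o -> Prop :=
  match o with Some t => elem X t | None => fun _ => True end.
Definition ole (o : option ty) : envty X o -> envty X o -> Prop :=
  match o with Some t => le X t | None => fun _ _ => True end.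
Definition olub (o : option ty) : (nat -> envty X o) -> envty X o -> Prop :=
  match o with Some t => is_lub (elem X t) (le X t) | None => fun _ _ => True end.

Definition envle {D} (h1 h2 : env X D) : Prop := forall x, ole (D x) (h1 x) (h2 x).
Definition envlub {D} (hc : nat -> env X D) (hl : env X D) : Prop :=
  forall x, olub (D x) (fun k => hc k x) (hl x).

Lemma ole_refl o (v : envty X o) : ole o v v.
Proof. destruct o; simpl; [reflexivity|auto]. Qed.

Lemma olub_elem {o} {c : nat -> envty X o} {l} : olub o c l -> oelem o l.
Proof. destruct o; simpl; [apply lub_elem|auto]. Qed.

Lemma olub_const {o} {v : envty X o} : oelem o v -> olub o (fun _ => v) v.
Proof. destruct o; simpl; [apply lub_const|auto]. Qed.

Lemma olub_tail {o} {c : nat -> envty X o} {l} N :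
  chain (ole o) c -> olub o c l -> olub o (fun j => c (N + j)) l.
Proof. destruct o; simpl; [apply lub_tail|auto]. Qed.

Lemma oval_elem {o t} (H : o = Some t) {v : envty X o} :
  oelem o v -> elem X t (eq_rect o (envty X) v (Some t) H).
Proof. now subst o. Qed.

Lemma oval_le {o t} (H : o = Some t) {v w : envty X o} :
  ole o v w -> le X t (eq_rect o (envty X) v (Some t) H) (eq_rect o (envty X) w (Some t) H).
Proof. now subst o. Qed.

Lemma oval_lub {o t} (H : o = Some t) {c : nat -> envty X o} {l} :
  olub o c l -> is_lub (elem X t) (le X t)
    (fun k => eq_rect o (envty X) (c k) (Some t) H) (eq_rect o (envty X) l (Some t) H).
Proof. now subst o. Qed.

Section Env.
Context {D : ctx}.

Lemma envle_refl (h : env X D) : envle h h.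
Proof. intros x; apply ole_refl. Qed.

Lemma envlub_elem {hc} {hl : env X D} : envlub hc hl -> envelem hl.
Proof. intros Hl x; exact (olub_elem (Hl x)). Qed.

Lemma envlub_const {h : env X D} : envelem h -> envlub (fun _ => h) h.
Proof. intros Eh x; exact (olub_const (Eh x)). Qed.

Lemma envlub_tail {hc} {hl : env X D} N :
  chain envle hc -> envlub hc hl -> envlub (fun j => hc (N + j)) hl.
Proof. intros Hc Hl x; exact (olub_tail N (fun k => Hc k x) (Hl x)). Qed.

Lemma extend_elem {h : env X D} x {t d} :
  envelem h -> elem X t d -> envelem (extend h x t d).
Proof. intros Eh Ed y; unfold extend, upd; destruct (Nat.eq_dec y x); [exact Ed|apply Eh]. Qed.

Lemma extend_le {h1 h2 : env X D} x {t d1 d2} :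
  envle h1 h2 -> le X t d1 d2 -> envle (extend h1 x t d1) (extend h2 x t d2).
Proof. intros Hh Hd y; unfold extend, upd; destruct (Nat.eq_dec y x); [exact Hd|apply Hh]. Qed.

Lemma extend_lub {hc} {hl : env X D} x {t dc dl} :
  envlub hc hl -> is_lub (elem X t) (le X t) dc dl ->
  envlub (fun k => extend (hc k) x t (dc k)) (extend hl x t dl).
Proof. intros Hh Hd y; unfold extend, upd; destruct (Nat.eq_dec y x); [exact Hd|apply Hh]. Qed.

End Env.
End Environments.

Record env_continuous {X D t} (F : env X D -> lift (raw X t)) : Prop := {
  ec_elem : forall h, envelem h -> liftelem (elem X t) (F h);
  ec_mono : forall h1 h2, envelem h1 -> envelem h2 -> envle h1 h2 ->
    liftle (le X t) (F h1) (F h2);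
  ec_lub : forall hc hl, (forall k, envelem (hc k)) -> chain envle hc -> envlub hc hl ->
    is_lub (liftelem (elem X t)) (liftle (le X t)) (fun k => F (hc k)) (F hl) }.

Record env_continuous2 {X D t t'} (K : env X D -> raw X t -> lift (raw X t')) : Prop := {
  ec2_elem : forall h a, envelem h -> elem X t a -> liftelem (elem X t') (K h a);
  ec2_mono : forall h h' a a', envelem h -> envelem h' -> elem X t a -> elem X t a' ->
    envle h h' -> le X t a a' -> liftle (le X t') (K h a) (K h' a');
  ec2_lub : forall hc hl ac al,
    (forall k, envelem (hc k)) -> chain envle hc -> envlub hc hl ->
    (forall k, elem X t (ac k)) -> chain (le X t) ac -> is_lub (elem X t) (le X t) ac al ->
    is_lub (liftelem (elem X t')) (liftle (le X t')) (fun k => K (hc k) (ac k)) (K hl al) }.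


Arguments ec_elem {X D t F} _ h _.
Arguments ec_mono {X D t F} _ h1 h2 _ _ _.
Arguments ec_lub {X D t F} _ hc hl _ _ _.
Arguments ec2_elem {X D t t' K} _ h a _ _.
Arguments ec2_mono {X D t t' K} _ h h' a a' _ _ _ _ _ _.
Arguments ec2_lub {X D t t' K} _ hc hl ac al _ _ _ _ _ _.

Section Continuity.
Context {X : Type}.

Lemma ec_const {D t} (u : lift (raw X t)) :
  liftelem (elem X t) u -> env_continuous (fun _ : env X D => u).
Proof. intros Eu; split; [auto | intros; reflexivity | intros; apply lub_const, Eu]. Qed.

Lemma ec_var {D x t} (H : D x = Some t) :
  env_continuous (fun h : env X D => Val (eq_rect (D x) (envty X) (h x) (Some t) H)).
Proof.
  split.
  - intros h Eh; exact (oval_elem H (Eh x)).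
  - intros h1 h2 _ _ H12; exact (oval_le H (H12 x)).
  - intros hc hl _ _ Hl; apply lub_Val; exact (oval_lub H (Hl x)).
Qed.

Lemma ec_bind {D t t'} {F : env X D -> lift (raw X t)} {K} :
  env_continuous F -> env_continuous2 K ->
  env_continuous (fun h => bind (F h) (K h) : lift (raw X t')).
Proof.
  intros HF HK; split.
  - intros h Eh; pose proof (ec_elem HF h Eh) as Ea.
    destruct (F h); simpl in *; auto; exact (ec2_elem HK h _ Eh Ea).
  - intros h1 h2 E1 E2 H12.
    pose proof (ec_elem HF h1 E1) as Ea1; pose proof (ec_elem HF h2 E2) as Ea2.
    pose proof (ec_mono HF h1 h2 E1 E2 H12) as Ha.
    destruct (F h1), (F h2); simpl in *; try tauto.
    exact (ec2_mono HK h1 h2 _ _ E1 E2 Ea1 Ea2 H12 Ha).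
  - intros hc hl Ehc Hc Hl.
    apply (bind_lub (E := elem X t)).
    + intros k; exact (ec_elem HF _ (Ehc k)).
    + intros k; exact (ec_mono HF _ _ (Ehc k) (Ehc (S k)) (Hc k)).
    + exact (ec_lub HF hc hl Ehc Hc Hl).
    + intros k a a' Ea Ea' Haa; exact (ec2_mono HK _ _ a a' (Ehc k) (Ehc (S k)) Ea Ea' (Hc k) Haa).
    + intros N ac al Eac Cac Hal.
      exact (ec2_lub HK (fun j => hc (N + j)) hl ac al (fun j => Ehc (N + j))
               (chain_tail N Hc) (envlub_tail N Hc Hl) Eac Cac Hal).
Qed.

Lemma ec2_if {D t} {F1 F2 : env X D -> lift (raw X t)} :
  env_continuous F1 -> env_continuous F2 ->
  env_continuous2 (fun h (b : raw X TBool) => if b then F1 h else F2 h).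
Proof.
  intros H1 H2; split.
  - intros h [|] Eh _; [exact (ec_elem H1 h Eh)|exact (ec_elem H2 h Eh)].
  - intros h h' b b' Eh Eh' _ _ Hhh' Hbb; simpl in Hbb; subst b'.
    destruct b; [exact (ec_mono H1 h h' Eh Eh' Hhh')|exact (ec_mono H2 h h' Eh Eh' Hhh')].
  - intros hc hl bc bl Ehc Hc Hl _ _ Hbl.
    replace (fun k => if bc k then F1 (hc k) else F2 (hc k))
      with (fun k => if bl then F1 (hc k) else F2 (hc k))
      by (apply functional_extensionality; intros k; now rewrite (lub_ub k Hbl)).
    destruct bl; [exact (ec_lub H1 hc hl Ehc Hc Hl)|exact (ec_lub H2 hc hl Ehc Hc Hl)].
Qed.

Lemma ec2_app {D t1 t2} {F : env X D -> lift (raw X t1)} P :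
  env_continuous F ->
  env_continuous2 (fun h (fv : raw X (TArr t1 t2)) => bind (F h) (fun a => fv P a)).
Proof.
  intros HF; split.
  - intros h fv Eh Efv; pose proof (ec_elem HF h Eh) as Ea.
    destruct (F h); simpl in *; auto; exact (proj1 (Efv P) _ Ea).
  - intros h h' fv fv' Eh Eh' Efv Efv' Hhh' Hff.
    pose proof (ec_elem HF h Eh) as Ea; pose proof (ec_elem HF h' Eh') as Ea'.
    pose proof (ec_mono HF h h' Eh Eh' Hhh') as Haa.
    destruct (F h) as [| |a], (F h') as [| |a']; simpl in *; try tauto.
    transitivity (fv P a'); [exact (proj1 (proj2 (Efv P)) _ _ Ea Ea' Haa)|exact (Hff P a' Ea')].
  - intros hc hl fc fl Ehc Hc Hl Efc Cfc Hfl.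
    apply (bind_lub (E := elem X t1)).
    + intros k; exact (ec_elem HF _ (Ehc k)).
    + intros k; exact (ec_mono HF _ _ (Ehc k) (Ehc (S k)) (Hc k)).
    + exact (ec_lub HF hc hl Ehc Hc Hl).
    + intros k a a' Ea Ea' Haa; transitivity (fc k P a').
      * exact (proj1 (proj2 (Efc k P)) _ _ Ea Ea' Haa).
      * exact (Cfc k P a' Ea').
    + intros N ac al Eac Cac Hal.
      exact (apply_lub X P (fun j => Efc (N + j)) (chain_tail N Cfc)
               (proj1 (lub_tail N Cfc) Hfl) Eac Cac Hal).
Qed.

Lemma ec_restrict {D x t t'} {F : env X (upd D x t) -> lift (raw X t')} {h : env X D} :
  env_continuous F -> envelem h -> continuous X t t' (fun d => F (extend h x t d)).
Proof.
  intros HF Eh; split; [|split].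
  - intros d Ed; exact (ec_elem HF _ (extend_elem x Eh Ed)).
  - intros d d' Ed Ed' Hdd.
    exact (ec_mono HF _ _ (extend_elem x Eh Ed) (extend_elem x Eh Ed')
             (extend_le x (envle_refl h) Hdd)).
  - intros c l Ec Hc Hl.
    exact (ec_lub HF (fun k => extend h x t (c k)) _
             (fun k => extend_elem x Eh (Ec k))
             (fun k => extend_le x (envle_refl h) (Hc k))
             (extend_lub x (envlub_const Eh) Hl)).
Qed.

Definition lam_den {D x t1 t2} (F : X -> env X (upd D x t1) -> lift (raw X t2))
  (h : env X D) : raw X (TArr t1 t2) :=
  fun P d => F P (extend h x t1 d).

Lemma ec_lam {D x t1 t2} {F : X -> env X (upd D x t1) -> lift (raw X t2)} :
  (forall P, env_continuous (F P)) -> env_continuous (fun h => Val (lam_den F h)).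
Proof.
  intros HF; split.
  - intros h Eh P; exact (ec_restrict (HF P) Eh).
  - intros h1 h2 E1 E2 H12 P d Ed.
    exact (ec_mono (HF P) _ _ (extend_elem x E1 Ed) (extend_elem x E2 Ed)
             (extend_le x H12 (reflexivity d))).
  - intros hc hl Ehc Hc Hl; apply lub_Val, arrow_lub_intro.
    + intros P; exact (ec_restrict (HF P) (envlub_elem Hl)).
    + intros P d Ed.
      exact (ec_lub (HF P) (fun k => extend (hc k) x t1 d) _
               (fun k => extend_elem x (Ehc k) Ed)
               (fun k => extend_le x (Hc k) (reflexivity d))
               (extend_lub x (dc := fun _ => d) Hl (lub_const Ed))).
Qed.

Lemma ec_extend {D f T t} {phi : env X D -> raw X T} {F : env X (upd D f T) -> lift (raw X t)} :
  env_continuous (fun h => Val (phi h)) -> env_continuous F ->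
  env_continuous (fun h => F (extend h f T (phi h))).
Proof.
  intros Hphi HF; split.
  - intros h Eh; exact (ec_elem HF _ (extend_elem f Eh (ec_elem Hphi h Eh))).
  - intros h1 h2 E1 E2 H12.
    exact (ec_mono HF _ _ (extend_elem f E1 (ec_elem Hphi h1 E1))
             (extend_elem f E2 (ec_elem Hphi h2 E2))
             (extend_le f H12 (ec_mono Hphi h1 h2 E1 E2 H12))).
  - intros hc hl Ehc Hc Hl.
    exact (ec_lub HF (fun k => extend (hc k) f T (phi (hc k))) _
             (fun k => extend_elem f (Ehc k) (ec_elem Hphi _ (Ehc k)))
             (fun k => extend_le f (Hc k) (ec_mono Hphi _ _ (Ehc k) (Ehc (S k)) (Hc k)))
             (extend_lub f Hl (proj1 lub_Val (ec_lub Hphi hc hl Ehc Hc Hl)))).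
Qed.

Section FixpointInEnvironment.
Variables (D : ctx) (f : var) (t1 t2 : ty).
Notation T := (TArr t1 t2).
Variable psi : env X (upd D f T) -> raw X T.
Hypothesis psi_cont : env_continuous (fun h => Val (psi h)).

Let Phi (h : env X D) (g : raw X T) : raw X T := psi (extend h f T g).

Lemma Phi_cont h : envelem h -> continuous X T T (fun g => Val (Phi h g)).
Proof. exact (ec_restrict psi_cont). Qed.

Lemma kleene_env_mono {h1 h2} (E1 : envelem h1) (E2 : envelem h2) :
  envle h1 h2 -> forall i, le X T (kleene (Phi h1) i) (kleene (Phi h2) i).
Proof.
  intros H12 i; induction i as [|i IH]; [reflexivity|].
  exact (ec_mono psi_cont _ _
           (extend_elem f E1 (kleene_elem (Phi_cont h1 E1) i))
           (extend_elem f E2 (kleene_elem (Phi_cont h2 E2) i))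
           (extend_le f H12 IH)).
Qed.

Lemma fixp_env_mono {h1 h2} (E1 : envelem h1) (E2 : envelem h2) :
  envle h1 h2 -> le X T (fixp X T (Phi h1)) (fixp X T (Phi h2)).
Proof.
  intros H12.
  exact (lub_mono (kleene_env_mono E1 E2 H12)
           (fixp_kleene_lub (Phi_cont h1 E1)) (fixp_kleene_lub (Phi_cont h2 E2))).
Qed.

Section Chain.
Variables (hc : nat -> env X D) (hl : env X D).
Hypotheses (Ehc : forall k, envelem (hc k)) (Hc : chain envle hc) (Hl : envlub hc hl).

Let Ehl : envelem hl := envlub_elem Hl.

Lemma kleene_env_lub i :
  is_lub (elem X T) (le X T) (fun k => kleene (Phi (hc k)) i) (kleene (Phi hl) i).
Proof.
  induction i as [|i IH]; [exact (lub_const (kleene_elem (Phi_cont hl Ehl) 0))|].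
  apply (proj1 (lub_Val (E := elem X T))).
  exact (ec_lub psi_cont (fun k => extend (hc k) f T (kleene (Phi (hc k)) i)) _
           (fun k => extend_elem f (Ehc k) (kleene_elem (Phi_cont _ (Ehc k)) i))
           (fun k => extend_le f (Hc k)
                       (kleene_env_mono (Ehc k) (Ehc (S k)) (Hc k) i))
           (extend_lub f Hl IH)).
Qed.

Lemma fixp_env_lub :
  is_lub (elem X T) (le X T) (fun k => fixp X T (Phi (hc k))) (fixp X T (Phi hl)).
Proof.
  apply (lub_swap (fun k i => kleene (Phi (hc k)) i) (L' := fun i => kleene (Phi hl) i)).
  - intros k i; exact (kleene_env_mono (Ehc k) (Ehc (S k)) (Hc k) i).
  - intros k; exact (kleene_chain (Phi_cont _ (Ehc k))).
  - intros k; exact (fixp_kleene_lub (Phi_cont _ (Ehc k))).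
  - apply lub_exists.
    + intros k; exact (lub_elem (fixp_kleene_lub (Phi_cont _ (Ehc k)))).
    + intros k; exact (fixp_env_mono (Ehc k) (Ehc (S k)) (Hc k)).
  - exact kleene_env_lub.
  - exact (fixp_kleene_lub (Phi_cont hl Ehl)).
Qed.

End Chain.

Lemma ec_fixp : env_continuous (fun h => Val (fixp X T (fun g => psi (extend h f T g)))).
Proof.
  split.
  - intros h Eh; exact (lub_elem (fixp_kleene_lub (Phi_cont h Eh))).
  - intros h1 h2 E1 E2 H12; exact (fixp_env_mono E1 E2 H12).
  - intros hc hl Ehc Hc Hl; apply lub_Val; exact (fixp_env_lub hc hl Ehc Hc Hl).
Qed.

End FixpointInEnvironment.

End Continuity.

Arguments ec_fixp {X D f t1 t2 psi} _.

Section Semantics.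
Context {Principal Privilege : Type} (ACL : Principal -> Pset Privilege).

Lemma den_continuous {D e t} (der : has_type D e t) n P :
  env_continuous (den ACL der n P).
Proof.
  revert n P; induction der; intros n0 P0; cbn [den].
  - apply ec_const; exact I.
  - apply ec_var.
  - exact (ec_bind (IHder1 n0 P0) (ec2_if (IHder2 n0 P0) (IHder3 n0 P0))).
  - exact (ec_lam (fun P => IHder n0 P)).
  - exact (ec_bind (IHder1 n0 P0) (ec2_app P0 (IHder2 n0 P0))).
  - exact (ec_extend (ec_fixp (ec_lam (fun P => IHder1 n0 P))) (IHder2 n0 P0)).
  - apply IHder.
  - apply IHder.
  - destruct (excluded_middle_informative _); [apply IHder | apply ec_const; exact I].
  - destruct (excluded_middle_informative _); [apply IHder1 | apply IHder2].
Qed.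

Lemma sden_continuous {D e t} (der : has_type D e t) S :
  env_continuous (sden ACL der S).
Proof.
  revert S; induction der; intros S0; cbn [sden].
  - apply ec_const; exact I.
  - apply ec_var.
  - exact (ec_bind (IHder1 S0) (ec2_if (IHder2 S0) (IHder3 S0))).
  - exact (ec_lam IHder).
  - exact (ec_bind (IHder1 S0) (ec2_app S0 (IHder2 S0))).
  - exact (ec_extend (ec_fixp (ec_lam IHder1)) (IHder2 S0)).
  - apply IHder.
  - destruct (stop S0); apply IHder.
  - destruct (excluded_middle_informative _); [apply IHder | apply ec_const; exact I].
  - destruct (excluded_middle_informative _); [apply IHder1 | apply IHder2].
Qed.

End Semantics.

Section LiftSimulation.
Context {A B : Type} {E : A -> Prop} {R : A -> A -> Prop} `{PreOrder A R}
  {E' : B -> Prop} {R' : B -> B -> Prop} `{PreOrder B R'} (Sim : A -> B -> Prop).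

Hypothesis Sim_lub : forall c c' l l',
  (forall k, E (c k)) -> chain R c -> is_lub E R c l ->
  (forall k, E' (c' k)) -> chain R' c' -> is_lub E' R' c' l' ->
  (forall k, Sim (c k) (c' k)) -> Sim l l'.

(* Related chains eventually have the same shape (all [Bot], [Star], or [Val]);
   the mixed cases are refuted at an index past both thresholds. *)
Lemma simlift_lub {u u' l l'} :
  (forall k, liftelem E (u k)) -> chain (liftle R) u -> is_lub (liftelem E) (liftle R) u l ->
  (forall k, liftelem E' (u' k)) -> chain (liftle R') u' ->
  is_lub (liftelem E') (liftle R') u' l' ->
  (forall k, simlift Sim (u k) (u' k)) -> simlift Sim l l'.
Proof.
  intros Eu Hu Hl Eu' Hu' Hl' Hs.
  destruct (lift_lub_inv Eu Hu Hl)
    as [[-> Hb] | [[-> [K HK]] | (K & ac & a & -> & Hac & Eac & Cac & Ha)]];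
  destruct (lift_lub_inv Eu' Hu' Hl')
    as [[-> Hb'] | [[-> [K' HK']] | (K' & ac' & a' & -> & Hac' & Eac' & Cac' & Ha')]];
  simpl; auto.
  - specialize (Hs K'); now rewrite Hb, HK' in Hs.
  - specialize (Hs (K' + 0)); now rewrite Hb, Hac' in Hs.
  - specialize (Hs K); now rewrite HK, Hb' in Hs.
  - specialize (Hs (K + K')).
    now rewrite (lift_chain_star Hu HK K'), Nat.add_comm, Hac' in Hs.
  - specialize (Hs (K + 0)); now rewrite Hac, Hb' in Hs.
  - specialize (Hs (K' + K)).
    now rewrite (lift_chain_star Hu' HK' K), Nat.add_comm, Hac in Hs.
  - apply (Sim_lub (fun j => ac (K' + j)) (fun j => ac' (K + j))).
    + intros j; apply Eac.
    + exact (chain_tail K' Cac).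
    + exact (proj1 (lub_tail K' Cac) Ha).
    + intros j; apply Eac'.
    + exact (chain_tail K Cac').
    + exact (proj1 (lub_tail K Cac') Ha').
    + intros j; specialize (Hs (K + (K' + j))); rewrite Hac in Hs.
      replace (K + (K' + j)) with (K' + (K + j)) in Hs by lia.
      now rewrite Hac' in Hs.
Qed.

End LiftSimulation.

Section Simulation.
Context {Principal Privilege : Type} (ACL : Principal -> Pset Privilege).
Notation XP := (Pset Privilege).
Notation XS := (stack Principal Privilege).

Lemma simv_lub t : forall c c' l l',
  (forall k, elem XP t (c k)) -> chain (le XP t) c -> is_lub (elem XP t) (le XP t) c l ->
  (forall k, elem XS t (c' k)) -> chain (le XS t) c' -> is_lub (elem XS t) (le XS t) c' l' ->
  (forall k, simv ACL t (c k) (c' k)) -> simv ACL t l l'.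
Proof.
  induction t as [|t1 _ t2 IH2].
  - intros c c' l l' _ _ Hl _ _ Hl' Hs; simpl.
    rewrite <- (lub_ub 0 Hl), <- (lub_ub 0 Hl'); apply Hs.
  - intros c c' l l' Ec Hc Hl Ec' Hc' Hl' Hs S d d' Ed Ed' Hdd.
    apply (simlift_lub (simv ACL t2) IH2
             (u := fun k => c k (privs ACL S) d) (u' := fun k => c' k S d')).
    + intros k; exact (proj1 (Ec k _) d Ed).
    + intros k; exact (Hc k _ d Ed).
    + exact (arrow_lub_pointwise XP Ec Hc Hl _ d Ed).
    + intros k; exact (proj1 (Ec' k S) d' Ed').
    + intros k; exact (Hc' k S d' Ed').
    + exact (arrow_lub_pointwise XS Ec' Hc' Hl' S d' Ed').
    + intros k; exact (Hs k S d d' Ed Ed' Hdd).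
Qed.

Lemma simv_fixp {t1 t2} {G : raw XP (TArr t1 t2) -> raw XP (TArr t1 t2)}
  {G' : raw XS (TArr t1 t2) -> raw XS (TArr t1 t2)} :
  continuous XP _ _ (fun g => Val (G g)) -> continuous XS _ _ (fun g => Val (G' g)) ->
  (forall g g', elem XP _ g -> elem XS _ g' -> simv ACL _ g g' -> simv ACL _ (G g) (G' g')) ->
  simv ACL _ (fixp XP _ G) (fixp XS _ G').
Proof.
  intros HG HG' Hsim.
  apply (simv_lub _ (kleene G) (kleene G') _ _
           (kleene_elem HG) (kleene_chain HG) (fixp_kleene_lub HG)
           (kleene_elem HG') (kleene_chain HG') (fixp_kleene_lub HG')).
  intros i; induction i as [|i IH].
  - intros S d d' _ _ _; exact I.
  - exact (Hsim _ _ (kleene_elem HG i) (kleene_elem HG' i) IH).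
Qed.

Lemma simv_var {o t} (H : o = Some t) {v : envty XP o} {v' : envty XS o} :
  match o return envty XP o -> envty XS o -> Prop with
  | Some t => simv ACL t | None => fun _ _ => True end v v' ->
  simv ACL t (eq_rect o (envty XP) v (Some t) H) (eq_rect o (envty XS) v' (Some t) H).
Proof. now subst o. Qed.

Lemma simenv_extend {D} (h : env XP D) (h' : env XS D) x t d d' :
  simenv ACL h h' -> simv ACL t d d' -> simenv ACL (extend h x t d) (extend h' x t d').
Proof. intros Hh Hd y; unfold extend, upd; destruct (Nat.eq_dec y x); [exact Hd|apply Hh]. Qed.

Lemma privs_signs n (S : XS) :
  (fun q => privs ACL S q /\ ACL n q) = privs ACL (MkStack (n, fun _ => False) (stop S :: srest S)).
Proof.
  apply functional_extensionality; intros q; apply propositional_extensionality.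
  unfold privs, scheck; simpl; tauto.
Qed.

Lemma privs_dopriv n P r p :
  (fun q => privs ACL (MkStack (n, P) r) q \/ (q = p /\ ACL n p)) =
  privs ACL (MkStack (n, fun q => P q \/ q = p) r).
Proof.
  apply functional_extensionality; intros q; apply propositional_extensionality.
  unfold privs, scheck; simpl; split.
  - intros [(Hn & Hq) | (-> & Hn)]; tauto.
  - intros (Hn & [[Hq | ->] | Hq]); tauto.
Qed.

End Simulation.

Section Soundness.
Context {Principal Privilege : Type} (ACL : Principal -> Pset Privilege).

(* The eager principal [n] must be the one on top of the stack, except for a
   [signs] expression, which ignores it: function bodies are [signs], so they
   can be run under the caller's stack. *)
Lemma den_sden_sim {D e t} (der : has_type D e t) :
  standard e -> forall S n h h', (is_signs e \/ n = fst (stop S)) ->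
  envelem h -> envelem h' -> simenv ACL h h' ->
  sim ACL t (den ACL der n (privs ACL S) h) (sden ACL der S h').
Proof.
  induction der; intros Hstd S n0 h h' Hn Eh Eh' Hs; unfold sim in *; cbn [den sden].
  - reflexivity.
  - exact (simv_var ACL e (Hs x)).
  - destruct Hstd as (Hstd0 & Hstd1 & Hstd2), Hn as [[]|Hn].
    pose proof (IHder1 Hstd0 S n0 h h' (or_intror Hn) Eh Eh' Hs) as Hb.
    destruct (den ACL der1 _ _ h) as [| |b], (sden ACL der1 S h') as [| |b'];
      simpl in *; try contradiction; auto.
    subst b'; destruct b; auto.
  - destruct Hstd as (Hsig & Hbody); intros S' d d' Ed Ed' Hdd.
    apply IHder; auto using extend_elem, simenv_extend.
  - destruct Hstd as (Hstd1 & Hstd2), Hn as [[]|Hn].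
    pose proof (IHder1 Hstd1 S n0 h h' (or_intror Hn) Eh Eh' Hs) as Hf.
    pose proof (IHder2 Hstd2 S n0 h h' (or_intror Hn) Eh Eh' Hs) as Ha.
    pose proof (ec_elem (den_continuous ACL der2 n0 (privs ACL S)) h Eh) as Ea.
    pose proof (ec_elem (sden_continuous ACL der2 S) h' Eh') as Ea'.
    destruct (den ACL der1 _ _ h) as [| |fv], (sden ACL der1 S h') as [| |fv'];
      simpl in Hf; try contradiction; simpl; auto.
    destruct (den ACL der2 _ _ h) as [| |a], (sden ACL der2 S h') as [| |a'];
      simpl in Ha; try contradiction; simpl; auto.
  - destruct Hstd as (Hsig & Hstd1 & Hstd2), Hn as [[]|Hn].
    pose proof (ec_restrict (ec_lam (den_continuous ACL der1 n0)) Eh) as HG.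
    pose proof (ec_restrict (ec_lam (sden_continuous ACL der1)) Eh') as HG'.
    apply IHder2; auto.
    + exact (extend_elem f Eh (lub_elem (fixp_kleene_lub HG))).
    + exact (extend_elem f Eh' (lub_elem (fixp_kleene_lub HG'))).
    + apply simenv_extend; [exact Hs|].
      apply (simv_fixp ACL HG HG').
      intros g g' Eg Eg' Hgg S' d d' Ed Ed' Hdd.
      apply IHder1; auto 6 using extend_elem, simenv_extend.
  - rewrite privs_signs; apply IHder; auto.
  - destruct Hn as [[]|Hn], S as [[n1 P1] r]; simpl in Hn; subst n0.
    rewrite privs_dopriv; apply IHder; auto.
  - destruct Hn as [[]|Hn]; change (privs ACL S p) with (scheck ACL p S).
    destruct (excluded_middle_informative _); simpl; auto.
  - destruct Hstd as (Hstd1 & Hstd2), Hn as [[]|Hn]; change (privs ACL S p) with (scheck ACL p S).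
    destruct (excluded_middle_informative _); auto.
Qed.

End Soundness.

Theorem lemma7 (Principal Privilege : Type) (ACL : Principal -> Pset Privilege)
  (n : Principal) (P' : Pset Privilege) (S : list (Principal * Pset Privilege))
  (D : ctx) (e : exp Principal Privilege) (t : ty) (der : has_type D e t)
  (h : env (Pset Privilege) D) (h' : env (stack Principal Privilege) D) :
  standard e ->
  envelem h -> envelem h' ->
  simenv ACL h h' ->
  sim ACL t
    (den ACL der n (privs ACL (MkStack (n, P') S)) h)
    (sden ACL der (MkStack (n, P') S) h').
Proof.
  intros Hstd Eh Eh' Hs.
  exact (den_sden_sim ACL der Hstd (MkStack (n, P') S) n h h' (or_intror eq_refl) Eh Eh' Hs).
Qed.
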